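(* Let $X\subseteq U$ with $|X|=m$ be partitioned (deterministically) into $k$ groups $X_1,\dots,X_k$, and suppose there is $m_0\ge1$ with $|X_i|\le m_0$ for all $i$. Let $h:U\to[n]$ be a simple tabulation hash function. Let $C_i$ be the number of unordered pairs $\{x,y\}\subseteq X_i$ with $x\ne y$ and $h(x)=h(y)$, and $C=\sum_{i=1}^k C_i$. Then $$\mathbb{E}[C]\le\frac{m\,m_0}{2n}\qquad\text{and}\qquad \mathrm{Var}[C]\le\frac{(3^c+1)m^2}{n}+\frac{m\,m_0^2}{n^2}.$$ Moreover, for any query key $q\in U\setminus X$ and any bin $z\in[n]$, $\mathbb{E}[C\mid h(q)=z]\le\frac{m\,m_0}{2n}$.
   Context: Simple tabulation hashing: the key universe is $U=[u]$, each key $x\in U$ is viewed as a vector $(x[0],\dots,x[c-1])$ of $c=O(1)$ characters from $\Sigma=[u^{1/c}]$; the range is $[n]=[2^r]$. $h(x)=h_0(x[0])\oplus\cdots\oplus h_{c-1}(x[c-1])$ with $h_0,\dots,h_{c-1}:\Sigma\to[2^r]$ independent fully random functions and $\oplus$ bitwise XOR. *)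

From HB Require Import structures.
From mathcomp Require Import all_boot all_order all_algebra.
Set Implicit Arguments. Unset Strict Implicit. Unset Printing Implicit Defensive.
Import Order.TTheory GRing.Theory Num.Theory.

(* Characters: Sigma = [s].  Keys: vectors of c characters (U = [s^c]). *)
Definition Key (s c : nat) := {ffun 'I_c -> 'I_s}.
(* Hash values in [2^r], represented by their r-bit binary expansion. *)
Definition Bin (r : nat) := {ffun 'I_r -> bool}.
Definition Table (s c r : nat) := {ffun 'I_c -> {ffun 'I_s -> Bin r}}.

Definition tab_hash (s c r : nat) (H : Table s c r) (x : Key s c) : Bin r :=
  [ffun b => \big[addb/false]_(j < c) H j (x j) b].

Definition collisions (s c r : nat) (H : Table s c r) (A : {set Key s c}) : nat :=
  #|[set p : {set Key s c} | (p \subset A) && (#|p| == 2) &&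
       [forall x in p, forall y in p, tab_hash H x == tab_hash H y]]|.

Definition C_total (s c r k : nat) (Xs : 'I_k -> {set Key s c}) (H : Table s c r) : nat :=
  \sum_(i < k) collisions H (Xs i).

Local Open Scope ring_scope.

(* Expectation w.r.t. the uniform distribution on tables (fully random h_j). *)
Definition Exp (R : realFieldType) (s c r : nat) (f : Table s c r -> R) : R :=
  (\sum_(H : Table s c r) f H) / (#|{: Table s c r}|)%:R.

Definition Var (R : realFieldType) (s c r : nat) (f : Table s c r -> R) : R :=
  Exp (fun H => (f H - Exp f) ^+ 2).

Definition CondExp (R : realFieldType) (s c r : nat) (f : Table s c r -> R)
  (A : {set Table s c r}) : R :=
  (\sum_(H in A) f H) / (#|A|)%:R.

(* Flipping the table entry h_j(a) by XOR with a fixed t is an involution of the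
   uniform space of tables that shifts h(x) by t when x[j] = a and fixes h(y) when
   y[j] <> a, so h(x) is uniform on every event invariant under these flips. Hence,
   for x <> y, Pr[h(x) = h(y)] = 1/n and Pr[h(x) = h(y), h(q) = z] = 1/n^2, and
   Pr[h(x) = h(y), h(z) = h(w)] = 1/n^2 unless the characters of x, y, z, w match up
   in pairs in every position. As 2C counts the colliding ordered pairs of distinct
   keys in a common group, E[C] and E[C | h(q) = z] both equal (number of such pairs)
   / 2n <= m m0 / 2n. In E[(2C)^2] the
   unpaired quadruples contribute exactly (2 E[C])^2 and each paired one at most 1/n.
   For each of the 3^c choices of pairing per position, a Cauchy-Schwarz count bounds
   the paired quadruples by m^2, so Var[C] <= 3^c m^2 / 4n. *)

From HB Require Import structures.
From mathcomp Require Import all_boot all_order all_algebra.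
From mathcomp Require Import ring lra.
Import Order.TTheory GRing.Theory Num.Theory.
Set Implicit Arguments. Unset Strict Implicit. Unset Printing Implicit Defensive.

Lemma sum_nat_mem (T : finType) (A : {pred T}) : \sum_(x : T) (x \in A : nat) = #|A|.
Proof. by rewrite -sum1_card [RHS]big_mkcond; apply: eq_bigr => x _; case: (x \in A). Qed.

Lemma sum_nat_pred1 (T : finType) (x0 : T) : \sum_(x : T) (x == x0 : nat) = 1.
Proof. by rewrite (bigD1 x0) //= eqxx big1 // => x /negbTE ->. Qed.

Lemma eq_ffunE (aT : finType) (rT : eqType) (f g : {ffun aT -> rT}) :
  (f == g) = [forall i, f i == g i].
Proof. by apply/eqP/forallP => [-> //|fg]; apply/ffunP => i; apply/eqP. Qed.

Lemma forall_andb (T : finType) (a b : pred T) :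
  [forall j, a j && b j] = [forall j, a j] && [forall j, b j].
Proof.
apply/forallP/andP => [ab|[/forallP a_ /forallP b_] j]; last by rewrite a_ b_.
by split; apply/forallP => j; case/andP: (ab j).
Qed.

Lemma unpaired_unique (T : eqType) (a b c d : T) :
  ~~ [|| (a == b) && (c == d), (a == c) && (b == d) | (a == d) && (b == c)] ->
  [|| [&& a != b, a != c & a != d], [&& b != a, b != c & b != d],
      [&& c != a, c != b & c != d] | [&& d != a, d != b & d != c]].
Proof.
by case: (eqVneq a b) => [->|]; try (case: (eqVneq a c) => [->|]);
  try (case: (eqVneq a d) => [->|]); try (case: (eqVneq b c) => [->|]);
  try (case: (eqVneq b d) => [->|]); try (case: (eqVneq c d) => [->|]);
  rewrite ?(eq_sym d c); case: (c == d).
Qed.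

Section Coincidences.
Variables I T : finType.

Definition coincidences (A B : pred I) (f g : I -> T) : nat :=
  \sum_(a : I) \sum_(b : I) (A a && B b && (f a == g b)).

Lemma coincidencesE A B f g : coincidences A B f g =
  \sum_(t : T) (\sum_(a : I) (A a && (f a == t))) * (\sum_(b : I) (B b && (g b == t))).
Proof.
under [RHS]eq_bigr do rewrite big_distrl /=.
rewrite [RHS]exchange_big /=; apply: eq_bigr => a _.
under [RHS]eq_bigr do rewrite big_distrr /=.
rewrite [RHS]exchange_big /=; apply: eq_bigr => b _.
rewrite (bigD1 (f a)) //= big1 ?addn0.
  by rewrite eqxx andbT mulnb [g b == _]eq_sym andbA.
by move=> t nt; rewrite [f a == t]eq_sym (negbTE nt) andbF.
Qed.

Lemma coincidences_leq A B f g :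
  2 * coincidences A B f g <= coincidences A A f f + coincidences B B g g.
Proof.
rewrite !coincidencesE big_distrr -big_split /=; apply: leq_sum => t _.
by rewrite !mulnn; exact: nat_Cauchy.
Qed.

End Coincidences.

Section PairedQuadruples.
Variables s c : nat.
Local Notation K := (Key s c).
Variable X : {set K}.

Definition paired (x y z w : K) := [forall j,
  [|| (x j == y j) && (z j == w j), (x j == z j) && (y j == w j)
    | (x j == w j) && (y j == z j)]].

(* pi j selects which of the pairings {x,y}{z,w}, {x,z}{y,w}, {x,w}{y,z} holds in
   position j. Regrouped as the pairs (x, w) and (y, z), a pi-paired quadruple is a
   coincidence of pattern_key with its variant pattern_keyC. *)
Section Pattern.
Variable pi : {ffun 'I_c -> 'I_3}.

Definition paired_by (x y z w : K) := [forall j,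
  if val (pi j) == 0 then (x j == y j) && (z j == w j)
  else if val (pi j) == 1 then (x j == z j) && (y j == w j)
  else (x j == w j) && (y j == z j)].

Definition pattern_pair (u : K * K) :=
  [&& u.1 \in X, u.2 \in X & [forall j, (val (pi j) == 2) ==> (u.1 j == u.2 j)]].

Definition pattern_key (u : K * K) : {ffun 'I_c -> option ('I_s * 'I_s)} :=
  [ffun j => if val (pi j) == 2 then None else Some (u.1 j, u.2 j)].

Definition pattern_keyC (u : K * K) : {ffun 'I_c -> option ('I_s * 'I_s)} :=
  [ffun j => if val (pi j) == 2 then None
             else if val (pi j) == 0 then Some (u.1 j, u.2 j) else Some (u.2 j, u.1 j)].

Lemma paired_byE x y z w :
  [&& x \in X, y \in X, z \in X, w \in X & paired_by x y z w] =
  pattern_pair (x, w) && pattern_pair (y, z) && (pattern_key (x, w) == pattern_keyC (y, z)).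
Proof.
rewrite /pattern_pair /=.
case: (x \in X); case: (y \in X); case: (z \in X); case: (w \in X); rewrite /= ?andbF //.
rewrite eq_ffunE -!forall_andb; apply: eq_forallb => j; rewrite !ffunE.
case: (pi j) => [[|[|[|?]]] ?] //=;
  by rewrite ?andbT // (inj_eq (@Some_inj _)) xpair_eqE // [w j == _]eq_sym.
Qed.

Lemma eq_pattern_keyC u v :
  (pattern_keyC u == pattern_keyC v) = (pattern_key u == pattern_key v).
Proof.
rewrite !eq_ffunE; apply: eq_forallb => j; rewrite !ffunE.
by case: (pi j) => [[|[|[|?]]] ?] //=; rewrite !(inj_eq (@Some_inj _)) !xpair_eqE andbC.
Qed.

(* A coincidence (x, w), (x', w') is determined by x and w': in the positions
   where pi j = 2 the pairs are constant, elsewhere the keys agree. *)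
Lemma coincidences_pattern_key_leq :
  coincidences pattern_pair pattern_pair pattern_key pattern_key <= #|X| * #|X|.
Proof.
pose mix (a b : K) : K := [ffun j => if val (pi j) == 2 then a j else b j].
pose F (xw : K * K) := ((xw.1, mix xw.1 xw.2), (mix xw.2 xw.1, xw.2)).
rewrite /coincidences pair_bigA /=.
set S := [set p : (K * K) * (K * K) |
  pattern_pair p.1 && pattern_pair p.2 && (pattern_key p.1 == pattern_key p.2)].
have -> : \sum_(p : (K * K) * (K * K)) (pattern_pair p.1 && pattern_pair p.2 &&
            (pattern_key p.1 == pattern_key p.2)) = #|S|.
  by rewrite -sum_nat_mem; apply: eq_bigr => p _; rewrite inE.
rewrite -cardsX; apply: leq_trans (leq_imset_card F _); apply: subset_leq_card.
apply/subsetP => -[[x w] [x' w']]; rewrite inE /= eq_ffunE.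
case/andP => /andP [/and3P [xX _ /forallP xw] /and3P [_ w'X /forallP xw']] /forallP key.
apply/imsetP; exists (x, w'); first by rewrite inE xX w'X.
congr ((_, _), (_, _)); apply/ffunP => j; move: (xw j) (xw' j) (key j); rewrite !ffunE /=.
- by case: ifP => _ /=; [move=> /eqP -> | move=> _ _ /eqP [_ ->]].
- by case: ifP => _ /=; [move=> _ /eqP -> | move=> _ _ /eqP [->]].
Qed.

Lemma npaired_by_leq : \sum_(u : K * K) \sum_(v : K * K)
    [&& u.1 \in X, u.2 \in X, v.1 \in X, v.2 \in X & paired_by u.1 u.2 v.1 v.2]
  <= #|X| * #|X|.
Proof.
pose sig (p : (K * K) * (K * K)) := ((p.1.1, p.2.2), (p.1.2, p.2.1)).
have sig_inj : injective sig by move=> [[? ?] [? ?]] [[? ?] [? ?]] [-> -> -> ->].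
have -> : \sum_(u : K * K) \sum_(v : K * K)
    [&& u.1 \in X, u.2 \in X, v.1 \in X, v.2 \in X & paired_by u.1 u.2 v.1 v.2] =
  coincidences pattern_pair pattern_pair pattern_key pattern_keyC.
  rewrite /coincidences !pair_bigA [RHS](reindex_inj sig_inj) /=.
  by apply: eq_bigr => -[[x y] [z w]] _; rewrite paired_byE.
rewrite -(leq_pmul2l (isT : 0 < 2)); apply: leq_trans (coincidences_leq _ _ _ _) _.
have -> : coincidences pattern_pair pattern_pair pattern_keyC pattern_keyC =
          coincidences pattern_pair pattern_pair pattern_key pattern_key.
  by apply: eq_bigr => u _; apply: eq_bigr => v _; rewrite eq_pattern_keyC.
by rewrite addnn -mul2n leq_mul2l coincidences_pattern_key_leq.
Qed.

End Pattern.

Lemma paired_by_of_paired x y z w : paired x y z w -> exists pi, paired_by pi x y z w.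
Proof.
move=> /forallP xyzw.
exists [ffun j => inord (if (x j == y j) && (z j == w j) then 0
                         else if (x j == z j) && (y j == w j) then 1 else 2)].
apply/forallP => j; rewrite ffunE /= inordK; last by case: ifP => //; case: ifP.
case xy_zw: ((x j == y j) && (z j == w j)) => //=.
case xz_yw: ((x j == z j) && (y j == w j)) => //=.
by move: (xyzw j); rewrite xy_zw xz_yw.
Qed.

Definition npaired : nat := \sum_(u : K * K) \sum_(v : K * K)
  [&& u.1 \in X, u.2 \in X, v.1 \in X, v.2 \in X & paired u.1 u.2 v.1 v.2].

Lemma npaired_leq : npaired <= 3 ^ c * (#|X| * #|X|).
Proof.
pose B pi (u v : K * K) :=
  [&& u.1 \in X, u.2 \in X, v.1 \in X, v.2 \in X & paired_by pi u.1 u.2 v.1 v.2].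
apply: (@leq_trans
  (\sum_(pi : {ffun 'I_c -> 'I_3}) \sum_(u : K * K) \sum_(v : K * K) B pi u v)).
  rewrite exchange_big; apply: leq_sum => u _; rewrite exchange_big; apply: leq_sum => v _.
  case/boolP: [&& _, _, _, _ & _] => // /and5P [u1X u2X v1X v2X /paired_by_of_paired [pi uv]].
  by rewrite (bigD1 pi) //= /B u1X u2X v1X v2X uv.
apply: (@leq_trans (\sum_(pi : {ffun 'I_c -> 'I_3}) #|X| * #|X|)).
  by apply: leq_sum => pi _; apply: npaired_by_leq.
by rewrite sum_nat_const card_ffun !card_ord.
Qed.

End PairedQuadruples.

Section TabulationProbabilities.
Variables s c r : nat.
Local Notation K := (Key s c).
Local Notation Tab := (Table s c r).

Definition bxor (a b : Bin r) : Bin r := [ffun i => a i (+) b i].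

Lemma bxorK t : involutive (bxor^~ t).
Proof. by move=> a; apply/ffunP => i; rewrite !ffunE addbK. Qed.

Lemma sum_bxor_eq a b : \sum_(t : Bin r) (bxor a t == b : nat) = 1.
Proof.
rewrite -(sum_nat_pred1 (bxor a b)); apply: eq_bigr => t _; congr nat_of_bool.
by apply/eqP/eqP => [<-|->]; apply/ffunP => i; rewrite !ffunE ?addKb.
Qed.

Definition flip (j : 'I_c) (a : 'I_s) (t : Bin r) (H : Tab) : Tab :=
  [ffun j' => [ffun a' => if (j' == j) && (a' == a) then bxor (H j' a') t else H j' a']].

Lemma flipK j a t : involutive (flip j a t).
Proof.
move=> H; apply/ffunP => j'; apply/ffunP => a'; rewrite !ffunE.
by case: ifP => e; rewrite e /= ?bxorK.
Qed.

Lemma tab_hash_flip_out j a t H (y : K) : y j != a ->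
  tab_hash (flip j a t H) y = tab_hash H y.
Proof.
move=> ya; apply/ffunP => b; rewrite !ffunE; apply: eq_bigr => j' _.
by rewrite !ffunE; case: eqP => [->|//]; rewrite (negbTE ya).
Qed.

Lemma tab_hash_flip j t H (x : K) :
  tab_hash (flip j (x j) t H) x = bxor (tab_hash H x) t.
Proof.
apply/ffunP => b; rewrite !ffunE (bigD1 j) //= [in RHS](bigD1 j) //= !ffunE !eqxx /=.
rewrite !ffunE -addbA [t b (+) _]addbC addbA; congr (_ (+) _ (+) _).
by apply: eq_bigr => j' /negbTE nj; rewrite !ffunE nj.
Qed.

Definition ntables (P : pred Tab) : nat := \sum_(H : Tab) P H.

Lemma ntablesT : ntables predT = #|{: Tab}|.
Proof. exact: sum1_card. Qed.

Lemma eq_ntables P Q : P =1 Q -> ntables P = ntables Q.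
Proof. by move=> PQ; apply: eq_bigr => H _; rewrite PQ. Qed.

Lemma leq_ntables P Q : subpred P Q -> ntables P <= ntables Q.
Proof. by move=> PQ; apply: leq_sum => H _; case: (boolP (P H)) => // /PQ ->. Qed.

(* Summing over the flips of the entry h_j(x[j]) by all t moves h(x) once
   through every value while fixing phi and P. *)
Lemma ntables_hash_uniform (x : K) j (phi : Tab -> Bin r) (P : pred Tab) :
  (forall t H, phi (flip j (x j) t H) = phi H) ->
  (forall t H, P (flip j (x j) t H) = P H) ->
  2 ^ r * ntables (fun H => (tab_hash H x == phi H) && P H) = ntables P.
Proof.
move=> phi_flip P_flip.
have flip_eq t : ntables (fun H => (tab_hash H x == phi H) && P H) =
                 ntables (fun H => (bxor (tab_hash H x) t == phi H) && P H).
  rewrite /ntables (reindex_inj (inv_inj (flipK j (x j) t))) /=.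
  by apply: eq_bigr => H _; rewrite tab_hash_flip phi_flip P_flip.
have card_Bin : #|{: Bin r}| = 2 ^ r by rewrite card_ffun card_bool card_ord.
rewrite -card_Bin -sum_nat_const (eq_bigr _ (fun t _ => flip_eq t)) exchange_big /=.
apply: eq_bigr => H _; under eq_bigr do rewrite -mulnb.
by rewrite -big_distrl /= sum_bxor_eq mul1n.
Qed.

Definition collide (H : Tab) (x y : K) : bool := tab_hash H x == tab_hash H y.

Lemma collideC H x y : collide H x y = collide H y x.
Proof. exact: eq_sym. Qed.

Lemma exists_char_neq (x y : K) : x != y -> exists j, x j != y j.
Proof. by rewrite eq_ffunE => /forallPn. Qed.

Lemma ntables_collide x y : x != y -> 2 ^ r * ntables (fun H => collide H x y) = #|{: Tab}|.
Proof.
case/exists_char_neq => j xy; rewrite -ntablesT.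
rewrite -(@ntables_hash_uniform x j (fun H => tab_hash H y) predT) //.
- by congr (_ * _); apply: eq_ntables => H; rewrite /= andbT.
- by move=> t H; rewrite tab_hash_flip_out // eq_sym.
Qed.

Lemma ntables_hash_eq q z : 0 < c ->
  2 ^ r * ntables (fun H => tab_hash H q == z) = #|{: Tab}|.
Proof.
move=> c_gt0; rewrite -ntablesT -(@ntables_hash_uniform q (Ordinal c_gt0) (fun=> z) predT) //.
by congr (_ * _); apply: eq_ntables => H; rewrite /= andbT.
Qed.

Lemma ntables_collide_hash_eq x y q z : 0 < c -> x != y ->
  2 ^ r * (2 ^ r * ntables (fun H => collide H x y && (tab_hash H q == z))) = #|{: Tab}|.
Proof.
move=> c_gt0 /exists_char_neq [j xy]; rewrite -(ntables_hash_eq q z c_gt0); congr (_ * _).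
have [qx|qx] := eqVneq (q j) (x j).
- rewrite (eq_ntables (Q := fun H => collide H y x && (tab_hash H q == z))); last first.
    by move=> H; rewrite collideC.
  apply: (ntables_hash_uniform (j := j)) => t H; first by rewrite tab_hash_flip_out.
  by rewrite tab_hash_flip_out // qx.
- apply: (ntables_hash_uniform (j := j)) => t H; rewrite tab_hash_flip_out //.
  by rewrite eq_sym.
Qed.

Lemma ntables_collide_and_leq x y (P : pred Tab) : x != y ->
  2 ^ r * ntables (fun H => collide H x y && P H) <= #|{: Tab}|.
Proof.
move=> xy; rewrite -(ntables_collide xy) leq_mul2l; apply/orP; right.
by apply: leq_ntables => H /andP [].
Qed.

Lemma ntables_collide2_char_unique (x y z w : K) j : z != w ->
  x j != y j -> x j != z j -> x j != w j ->
  2 ^ r * (2 ^ r * ntables (fun H => collide H x y && collide H z w)) = #|{: Tab}|.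
Proof.
move=> zw xy xz xw; rewrite (@ntables_hash_uniform x j (fun H => tab_hash H y)).
- exact: ntables_collide.
- by move=> t H; rewrite tab_hash_flip_out // eq_sym.
- by move=> t H; rewrite /collide !tab_hash_flip_out // eq_sym.
Qed.

Lemma ntables_collide2 (x y z w : K) : x != y -> z != w -> ~~ paired x y z w ->
  2 ^ r * (2 ^ r * ntables (fun H => collide H x y && collide H z w)) = #|{: Tab}|.
Proof.
move=> xy zw /forallPn [j /unpaired_unique].
have swap_pairs x' y' z' w' :
    ntables (fun H => collide H x' y' && collide H z' w') =
    ntables (fun H => collide H z' w' && collide H x' y').
  by apply: eq_ntables => H; rewrite andbC.
have swap_first x' y' z' w' :
    ntables (fun H => collide H x' y' && collide H z' w') =
    ntables (fun H => collide H y' x' && collide H z' w').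
  by apply: eq_ntables => H; rewrite collideC.
case/or4P => /and3P [u1 u2 u3].
- exact: ntables_collide2_char_unique zw u1 u2 u3.
- by rewrite swap_first; apply: ntables_collide2_char_unique zw u1 u2 u3.
- by rewrite swap_pairs; apply: ntables_collide2_char_unique xy u3 u1 u2.
- by rewrite swap_pairs swap_first; apply: ntables_collide2_char_unique xy u3 u1 u2.
Qed.

Lemma ntables_collide2_leq (x y z w : K) : x != y -> z != w ->
  2 ^ r * (2 ^ r * ntables (fun H => collide H x y && collide H z w))
  <= #|{: Tab}| + 2 ^ r * paired x y z w * #|{: Tab}|.
Proof.
move=> xy zw; case/boolP: (paired x y z w) => [_|unpaired].
  by rewrite muln1 (leq_trans _ (leq_addl _ _)) // leq_mul2l ntables_collide_and_leq ?orbT.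
by rewrite ntables_collide2 // muln0 mul0n addn0.
Qed.

End TabulationProbabilities.

Section TwoSubsets.
Variable T : finType.

Lemma set2_eq_ordered (x y a b : T) : a != b ->
  ([set x; y] == [set a; b]) && (x != y) = ((x, y) == (a, b)) || ((x, y) == (b, a)).
Proof.
move=> ab; apply/idP/idP => [/andP [/eqP xy_ab x_y]|/orP [] /eqP [-> ->]].
- have x_ab : x \in [set a; b] by rewrite -xy_ab set21.
  have y_ab : y \in [set a; b] by rewrite -xy_ab set22.
  by move: x_y; case/set2P: x_ab => ->; case/set2P: y_ab => ->; rewrite ?eqxx ?orbT.
- by rewrite eqxx ab.
- by rewrite [[set b; a]]setUC eqxx eq_sym ab.
Qed.

Lemma sum_ordered_pairs_set2 (p : {set T}) : #|p| = 2 ->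
  \sum_(u : T * T) (([set u.1; u.2] == p) && (u.1 != u.2)) = 2.
Proof.
move/eqP/cards2P => [a [b [ab ->]]].
rewrite (eq_bigr (fun u => (u == (a, b)) + (u == (b, a)))) ?big_split /= ?sum_nat_pred1 //.
move=> -[x y] _; rewrite /= set2_eq_ordered //.
by case: eqP => [[-> ->]|]; rewrite ?xpair_eqE ?(negbTE ab) //; case: eqP.
Qed.

Lemma double_card_const_2subsets (U : eqType) (f : T -> U) (A : {set T}) :
  2 * #|[set p : {set T} | (p \subset A) && (#|p| == 2) &&
          [forall x in p, forall y in p, f x == f y]]| =
  \sum_(u : T * T) [&& u.1 \in A, u.2 \in A, u.1 != u.2 & f u.1 == f u.2].
Proof.
set S := [set p : {set T} | _].
have S_pair (x y : T) : x != y ->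
    [&& x \in A, y \in A & f x == f y] = ([set x; y] \in S).
  move=> xy; rewrite inE cards2 xy subUset !sub1set andbT.
  case: (x \in A); case: (y \in A) => //=; apply/eqP/forall_inP => [fxy v|].
    by case/set2P => ->; apply/forall_inP => v' /set2P [] ->; rewrite // eq_sym fxy.
  by move/(_ x (set21 _ _))/forall_inP/(_ y (set22 _ _))/eqP.
transitivity (\sum_(p : {set T})
  (p \in S) * \sum_(u : T * T) (([set u.1; u.2] == p) && (u.1 != u.2))).
  rewrite -sum_nat_mem big_distrr /=; apply: eq_bigr => p.
  case/boolP: (p \in S) => //; rewrite inE => /andP [/andP [_ /eqP p2] _] _.
  by rewrite sum_ordered_pairs_set2 // mul1n.
rewrite (eq_bigr _ (fun p _ => big_distrr _ _ _)) exchange_big /=; apply: eq_bigr => u _.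
rewrite (bigD1 [set u.1; u.2]) //= big1 ?addn0; last first.
  by move=> p /negbTE np; rewrite eq_sym np muln0.
rewrite eqxx /=; case: (eqVneq u.1 u.2) => [_|/S_pair <-]; first by rewrite muln0 !andbF.
by rewrite muln1; case: (_ \in A); case: (_ \in A).
Qed.

End TwoSubsets.

Section Groups.
Variables s c r k : nat.
Local Notation K := (Key s c).
Local Notation Tab := (Table s c r).
Variables (X : {set K}) (Xs : 'I_k -> {set K}).
Hypothesis X_cover : X = \bigcup_(i < k) Xs i.
Hypothesis Xs_disjoint : forall i j : 'I_k, i != j -> [disjoint Xs i & Xs j].

Definition same_group (x y : K) := [exists i, (x \in Xs i) && (y \in Xs i)].

Definition intra_pair (u : K * K) := same_group u.1 u.2 && (u.1 != u.2).

Definition nintra : nat := \sum_(u : K * K) intra_pair u.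

Lemma group_unique i i' x : x \in Xs i -> x \in Xs i' -> i = i'.
Proof.
move=> xi xi'; apply/eqP; apply: contraT => /Xs_disjoint/disjointFr/(_ xi).
by rewrite xi'.
Qed.

Lemma sum_group_indicator x y :
  \sum_(i < k) ((x \in Xs i) && (y \in Xs i)) = same_group x y.
Proof.
case/boolP: (same_group x y) => [/existsP [i /andP [xi yi]]|/existsPn not_same].
  rewrite (bigD1 i) ?xi ?yi //= big1 // => i' i'i.
  by case/boolP: (x \in Xs i') => // /group_unique/(_ xi) /eqP; rewrite (negbTE i'i).
by apply: big1 => i _; rewrite (negbTE (not_same i)).
Qed.

Lemma intra_pair_in u : intra_pair u -> [&& u.1 \in X, u.2 \in X & u.1 != u.2].
Proof.
case/andP => /existsP [i /andP [u1i u2i]] ->.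
by rewrite X_cover; apply/and3P; split => //; apply/bigcupP; exists i.
Qed.

Lemma nintra_leq m0 : (forall i, #|Xs i| <= m0) -> nintra <= #|X| * m0.
Proof.
move=> Xs_small; rewrite /nintra -(pair_bigA _ (fun x y => intra_pair (x, y) : nat)) /=.
rewrite -sum_nat_mem big_distrl /=; apply: leq_sum => x _.
case/boolP: (x \in X) => xX; last first.
  rewrite big1 // => y _; case/boolP: (intra_pair (x, y)) => // /intra_pair_in.
  by rewrite (negbTE xX).
move: (xX); rewrite X_cover => /bigcupP [i _ xi].
rewrite mul1n; apply: leq_trans (Xs_small i); rewrite -sum_nat_mem; apply: leq_sum => y _.
case/boolP: (intra_pair (x, y)) => // /andP [/existsP [i' /andP [xi' yi']] _].
by rewrite -(group_unique xi' xi) yi'.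
Qed.

Lemma double_C_total (H : Tab) :
  2 * C_total Xs H = \sum_(u : K * K) (intra_pair u && collide H u.1 u.2).
Proof.
rewrite /C_total big_distrr /=.
under eq_bigr do rewrite double_card_const_2subsets.
rewrite exchange_big /=; apply: eq_bigr => u _.
transitivity ((\sum_(i < k) ((u.1 \in Xs i) && (u.2 \in Xs i))) *
              ((u.1 != u.2) && collide H u.1 u.2)).
  by rewrite big_distrl; apply: eq_bigr => i _ /=; rewrite mulnb !andbA.
by rewrite sum_group_indicator mulnb andbA.
Qed.

Lemma sum_C_total_and (P : pred Tab) :
  \sum_(H : Tab) P H * (2 * C_total Xs H) =
  \sum_(u : K * K) intra_pair u * ntables (fun H => collide H u.1 u.2 && P H).
Proof.
under eq_bigr do rewrite double_C_total big_distrr /=.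
rewrite exchange_big; apply: eq_bigr => u _; rewrite big_distrr; apply: eq_bigr => H _.
by case: (P H); case: (intra_pair u); case: (collide H u.1 u.2).
Qed.

Lemma sum_intra_pair_const (F : K * K -> nat) a :
  (forall u, intra_pair u -> F u = a) -> \sum_(u : K * K) intra_pair u * F u = nintra * a.
Proof.
move=> F_a; rewrite /nintra big_distrl; apply: eq_bigr => u _.
by case/boolP: (intra_pair u) => [/F_a ->|]; rewrite ?mul0n.
Qed.

Lemma sum_C_total : 2 ^ r * (2 * \sum_(H : Tab) C_total Xs H) = nintra * #|{: Tab}|.
Proof.
rewrite big_distrr (eq_bigr (fun H => predT H * (2 * C_total Xs H))) => [|H _]; last first.
  by rewrite /= mul1n.
rewrite sum_C_total_and big_distrr /=; under eq_bigr do rewrite mulnCA.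
apply: sum_intra_pair_const => u /intra_pair_in/and3P [_ _ u12].
rewrite -(ntables_collide r u12); congr (_ * _).
by apply: eq_ntables => H; rewrite /= andbT.
Qed.

Lemma sum_C_total_hash_eq q z : 0 < c ->
  2 ^ r * (2 ^ r * (2 * \sum_(H : Tab) (tab_hash H q == z) * C_total Xs H))
  = nintra * #|{: Tab}|.
Proof.
move=> c_gt0; rewrite big_distrr (eq_bigr _ (fun H _ => mulnCA _ _ _)) sum_C_total_and.
rewrite !big_distrr /=; under eq_bigr do rewrite [in X in 2 ^ r * X]mulnCA mulnCA.
apply: sum_intra_pair_const => u /intra_pair_in/and3P [_ _ u12].
exact: ntables_collide_hash_eq.
Qed.

Lemma sum_sqr_C_total : \sum_(H : Tab) (2 * C_total Xs H) ^ 2 =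
  \sum_(u : K * K) \sum_(v : K * K)
    intra_pair u * intra_pair v *
    ntables (fun H : Tab => collide H u.1 u.2 && collide H v.1 v.2).
Proof.
transitivity (\sum_(v : K * K) intra_pair v *
  \sum_(H : Tab) collide H v.1 v.2 * (2 * C_total Xs H)).
  under eq_bigr => H _ do rewrite -mulnn [in X in X * _]double_C_total big_distrl /=.
  rewrite exchange_big; apply: eq_bigr => v _; rewrite big_distrr.
  by apply: eq_bigr => H _ /=; rewrite [RHS]mulnA mulnb.
under eq_bigr do rewrite sum_C_total_and big_distrr.
rewrite exchange_big; apply: eq_bigr => u _; apply: eq_bigr => v _ /=.
by rewrite mulnCA mulnA.
Qed.

Lemma sum_sqr_C_total_leq :
  2 ^ r * (2 ^ r * \sum_(H : Tab) (2 * C_total Xs H) ^ 2)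
  <= nintra ^ 2 * #|{: Tab}| + 2 ^ r * npaired X * #|{: Tab}|.
Proof.
have -> : nintra ^ 2 * #|{: Tab}| =
    \sum_(u : K * K) \sum_(v : K * K) intra_pair u * intra_pair v * #|{: Tab}|.
  rewrite -mulnn /nintra !big_distrl /=; apply: eq_bigr => u _.
  by rewrite !big_distrr big_distrl.
have -> : 2 ^ r * npaired X * #|{: Tab}| = \sum_(u : K * K) \sum_(v : K * K)
    2 ^ r * [&& u.1 \in X, u.2 \in X, v.1 \in X, v.2 \in X & paired u.1 u.2 v.1 v.2]
    * #|{: Tab}|.
  rewrite /npaired big_distrr big_distrl /=; apply: eq_bigr => u _.
  by rewrite big_distrr big_distrl.
rewrite sum_sqr_C_total !big_distrr -big_split /=; apply: leq_sum => u _.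
rewrite !big_distrr -big_split /=; apply: leq_sum => v _.
case/boolP: (intra_pair u) => [/intra_pair_in/and3P [u1X u2X u12]|]; last first.
  by rewrite !mul0n !muln0.
case/boolP: (intra_pair v) => [/intra_pair_in/and3P [v1X v2X v12]|]; last first.
  by rewrite !mul0n !muln0.
by rewrite u1X u2X v1X v2X !mul1n ntables_collide2_leq.
Qed.

End Groups.

Local Open Scope ring_scope.

Section UniformTables.
Variables (R : realFieldType) (s c r : nat).
Local Notation Tab := (Table s c r).

Lemma card_Table_gt0 : (0 < #|{: Tab}|)%N.
Proof. by apply/card_gt0P; exists [ffun _ => [ffun _ => [ffun _ => false]]]. Qed.

Lemma Exp_nat (f : Tab -> nat) :
  Exp (fun H => (f H)%:R : R) = (\sum_(H : Tab) f H)%:R / #|{: Tab}|%:R.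
Proof. by rewrite /Exp natr_sum. Qed.

Lemma VarE (f : Tab -> R) : Var f = Exp (fun H => f H ^+ 2) - Exp f ^+ 2.
Proof.
have N_neq0 : #|{: Tab}|%:R != 0 :> R by rewrite pnatr_eq0 -lt0n card_Table_gt0.
rewrite /Var {1 3}/Exp; set mu := Exp f.
have sum_f : \sum_(H : Tab) f H = mu * #|{: Tab}|%:R by rewrite /mu /Exp mulfVK.
rewrite (eq_bigr (fun H => f H ^+ 2 - 2 * mu * f H + mu ^+ 2)) => [|H _]; last by ring.
rewrite big_split sumrB /= -mulr_sumr sumr_const -mulr_natr sum_f.
by field.
Qed.

Lemma CondExp_nat (f : Tab -> nat) (P : pred Tab) :
  CondExp (fun H => (f H)%:R : R) [set H | P H] =
  (\sum_(H : Tab) P H * f H)%:R / (ntables P)%:R.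
Proof.
rewrite /CondExp natr_sum big_mkcond /=; congr (_ / _%:R).
  by apply: eq_bigr => H _; rewrite inE; case: (P H); rewrite ?mul1n ?mul0n.
by rewrite -sum_nat_mem; apply: eq_bigr => H _; rewrite inE.
Qed.

End UniformTables.

Section CollisionMoments.
Variables (R : realFieldType) (s c r k : nat).
Local Notation K := (Key s c).
Local Notation Tab := (Table s c r).
Variables (X : {set K}) (Xs : 'I_k -> {set K}).
Hypothesis X_cover : X = \bigcup_(i < k) Xs i.
Hypothesis Xs_disjoint : forall i j : 'I_k, i != j -> [disjoint Xs i & Xs j].

Let n : R := (2 ^ r)%:R.
Let N : R := #|{: Tab}|%:R.
Let C (H : Tab) : R := (C_total Xs H)%:R.

Let n_gt0 : 0 < n. Proof. by rewrite ltr0n expn_gt0. Qed.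
Let N_gt0 : 0 < N. Proof. by rewrite ltr0n card_Table_gt0. Qed.

Lemma Exp_C_total : Exp C = (nintra Xs)%:R / (2 * n).
Proof.
have := congr1 (fun a => a%:R : R) (sum_C_total r X_cover Xs_disjoint).
rewrite /= !natrM -/n -/N => sum_C.
rewrite Exp_nat -/N; apply/eqP; rewrite eqr_div ?lt0r_neq0 ?mulr_gt0 //.
by rewrite -sum_C; apply/eqP; ring.
Qed.

Lemma Var_C_total_leq : Var C <= (npaired X)%:R / (4 * n).
Proof.
have := sum_sqr_C_total_leq r X_cover Xs_disjoint.
rewrite (eq_bigr (fun H : Tab => (4 * C_total Xs H ^ 2)%N)) => [|H _]; last by rewrite expnMn.
rewrite -big_distrr -(ler_nat R) !natrD !natrM -/n -/N => sum_sqr.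
rewrite VarE Exp_C_total.
have -> : Exp (fun H => C H ^+ 2) = (\sum_(H : Tab) C_total Xs H ^ 2)%:R / N.
  by rewrite /Exp natr_sum; congr (_ / _); apply: eq_bigr => H _; rewrite natrX.
move: sum_sqr; set S2 := (\sum_(H : Tab) _)%:R; set g := (nintra Xs)%:R => sum_sqr.
have -> : S2 / N - (g / (2 * n)) ^+ 2 = (n * (n * (4 * S2)) - g * g * N) / (4 * n ^+ 2 * N).
  by field; rewrite !lt0r_neq0.
have -> : (npaired X)%:R / (4 * n) = n * (npaired X)%:R * N / (4 * n ^+ 2 * N).
  by field; rewrite !lt0r_neq0.
rewrite ler_pM2r ?invr_gt0 ?mulr_gt0 ?exprn_gt0 //; lra.
Qed.

Lemma CondExp_C_total q z : (0 < c)%N ->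
  CondExp C [set H | tab_hash H q == z] = (nintra Xs)%:R / (2 * n).
Proof.
move=> c_gt0; rewrite CondExp_nat.
have := congr1 (fun a => a%:R : R) (sum_C_total_hash_eq X_cover Xs_disjoint q z c_gt0).
have := congr1 (fun a => a%:R : R) (ntables_hash_eq q z c_gt0).
rewrite /= !natrM -/n -/N => hash_eq sum_C.
have NA_gt0 : 0 < (ntables (fun H : Tab => tab_hash H q == z))%:R :> R.
  by rewrite -(pmulr_rgt0 _ n_gt0) hash_eq.
apply/eqP; rewrite eqr_div ?lt0r_neq0 ?mulr_gt0 //; apply/eqP.
apply: (mulfI (lt0r_neq0 n_gt0)); transitivity ((nintra Xs)%:R * N).
  by rewrite -sum_C; ring.
by rewrite -hash_eq; ring.
Qed.

End CollisionMoments.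

Theorem lemma5 (R : realFieldType) (s c r k m0 : nat)
  (X : {set Key s c}) (Xs : 'I_k -> {set Key s c}) :
  (0 < c)%N ->
  X = \bigcup_(i < k) Xs i ->
  (forall i j : 'I_k, i != j -> [disjoint Xs i & Xs j]) ->
  (1 <= m0)%N ->
  (forall i : 'I_k, #|Xs i| <= m0)%N ->
  let m := #|X| in
  let n : R := (2 ^ r)%:R in
  let C := fun H : Table s c r => ((C_total Xs H)%:R : R) in
  [/\ Exp C <= (m * m0)%:R / (2 * n),
      Var C <= ((3 ^ c + 1) * m ^ 2)%:R / n + (m * m0 ^ 2)%:R / n ^+ 2
    & forall (q : Key s c) (z : Bin r), q \notin X ->
        CondExp C [set H | tab_hash H q == z] <= (m * m0)%:R / (2 * n)].
Proof.
move=> c_gt0 X_cover Xs_disjoint _ Xs_small m n C.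
have n_gt0 : 0 < n by rewrite ltr0n expn_gt0.
have nintra_leq : (nintra Xs)%:R <= (m * m0)%:R :> R.
  by rewrite ler_nat; apply: nintra_leq.
have npaired_leq : (npaired X)%:R <= (3 ^ c * m ^ 2)%:R :> R.
  by rewrite ler_nat -mulnn; apply: npaired_leq.
have div_2n_leq (a : R) : a <= (m * m0)%:R -> a / (2 * n) <= (m * m0)%:R / (2 * n).
  by move=> ?; rewrite ler_wpM2r // invr_ge0 mulr_ge0 // ltW.
split.
- by rewrite (Exp_C_total R r X_cover Xs_disjoint); apply: div_2n_leq.
- apply: le_trans (Var_C_total_leq R r X_cover Xs_disjoint) _.
  apply: le_trans (_ : _ <= ((3 ^ c + 1) * m ^ 2)%:R / n) _.
    rewrite invfM mulrA ler_pM2r ?invr_gt0 // mulnDl natrD mul1n.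
    have := ler0n R (m ^ 2); have := ler0n R (npaired X); lra.
  by rewrite lerDl divr_ge0 ?exprn_ge0 // ltW.
- move=> q z _; rewrite (CondExp_C_total R X_cover Xs_disjoint q z c_gt0).
  exact: div_2n_leq.
Qed.
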